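(* Let $X\subset A^+$ be a thin maximal bifix code and let $x\in A^{\mathbb N}$ be an $X$-stable infinite word. If $\mathrm{Card}(X\cap F(x))\le d_{F(x)}(X)$, then $x$ is ultimately periodic.
   Context: $A$ is a finite alphabet. A bifix code is a set of nonempty words none of which is a proper prefix or proper suffix of another; a maximal bifix code is one not properly contained in another bifix code of $A^*$; it is thin if some word of $A^*$ is not a factor of any of its words. For an infinite word $y$, $F(y)$ is its set of finite factors. A parse of $w$ with respect to $X$ is a triple $(v,z,u)$ with $w=vzu$, $v$ having no suffix in $X$, $z\in X^*$, $u$ having no prefix in $X$; $\delta_X(w)$ is their number, and $d_{F(y)}(X)=\max_{w\in F(y)}\delta_X(w)$. An infinite word $x$ is $X$-stable if $d_{F(y)}(X)=d_{F(x)}(X)$ for every suffix $y$ of $x$ (i.e. every $y$ with $x=uy$, $u\in A^*$). $x=a_0a_1\cdots$ is ultimately periodic if there is $n\ge1$ with $a_{i+n}=a_i$ for all sufficiently large $i$. *)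

From mathcomp Require Import all_boot.
Set Implicit Arguments. Unset Strict Implicit. Unset Printing Implicit Defensive.

Section Words.
Variable A : finType.
Notation word := (seq A).

Definition bifix_code (X : pred word) : Prop :=
  (forall u, X u -> u != [::]) /\
  (forall u v, X u -> X v -> prefix u v -> u = v) /\
  (forall u v, X u -> X v -> suffix u v -> u = v).

Definition maximal_bifix_code (X : pred word) : Prop :=
  bifix_code X /\
  (forall Y : pred word, bifix_code Y -> (forall u, X u -> Y u) -> forall u, Y u -> X u).

Definition thin (X : pred word) : Prop :=
  exists w : word, forall u, X u -> ~~ infix w u.

(* membership in X^* (fuel = size z suffices since each factor is nonempty) *)
Fixpoint in_star_aux (X : pred word) (n : nat) (z : word) : bool :=
  match n with
  | 0 => z == [::]
  | n'.+1 => (z == [::]) ||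
      has (fun k => X (take k z) && in_star_aux X n' (drop k z)) (iota 1 (size z))
  end.
Definition in_star (X : pred word) (z : word) : bool := in_star_aux X (size z) z.

Definition no_suffix_in (X : pred word) (v : word) : bool :=
  ~~ has (fun k => X (drop k v)) (iota 0 (size v).+1).
Definition no_prefix_in (X : pred word) (u : word) : bool :=
  ~~ has (fun k => X (take k u)) (iota 0 (size u).+1).

(* parse (v,z,u) of w: w = v z u, encoded by the cut points i <= j *)
Definition is_parse (X : pred word) (w : word) (ij : nat * nat) : bool :=
  let v := take ij.1 w in
  let z := drop ij.1 (take ij.2 w) in
  let u := drop ij.2 w in
  [&& no_suffix_in X v, in_star X z & no_prefix_in X u].

Definition cuts (w : word) : seq (nat * nat) :=
  [seq (i, j) | i <- iota 0 (size w).+1, j <- iota i ((size w).+1 - i)].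

Definition delta (X : pred word) (w : word) : nat := count (is_parse X w) (cuts w).

Definition factor (x : nat -> A) (w : word) : Prop :=
  exists i, w = mkseq (fun k => x (i + k)) (size w).

Definition is_dF (F : word -> Prop) (X : pred word) (d : nat) : Prop :=
  (exists w, F w /\ delta X w = d) /\ (forall w, F w -> delta X w <= d).

Definition shift (x : nat -> A) (m : nat) : nat -> A := fun n => x (m + n).

Definition stable (X : pred word) (x : nat -> A) : Prop :=
  forall m d, is_dF (factor (shift x m)) X d <-> is_dF (factor x) X d.

Definition card_le (P : word -> Prop) (d : nat) : Prop :=
  exists s : seq word, size s <= d /\ forall w, P w -> w \in s.

Definition ultimately_periodic (x : nat -> A) : Prop :=
  exists n, 0 < n /\ exists N, forall i, N <= i -> x (i + n) = x i.

End Words.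

From mathcomp Require Import all_boot zify.
From Stdlib Require Import Classical.
Set Implicit Arguments. Unset Strict Implicit. Unset Printing Implicit Defensive.

(* Since X is a prefix code, a parse of w is determined by its left cut, so delta_X(w)
   counts the i <= |w| such that w[0,i) has no suffix in X.  Let d = d_F(x)(X) and let M
   bound the lengths of the words of X ∩ F(x).  Stability forces an X-word to start at
   every position of x, and the bound d forces every long prefix of x to end with an
   X-word; hence beyond some point, for every window [i, i+M] at least d of the X-words
   starting in it run past its end.  If x were not ultimately periodic, two late
   occurrences of a word of length M would be followed by different letters; the X-words
   starting at the corresponding positions of the two occurrences then branch at d
   distinct depths.  But m words have fewer than m distinct branching depths, while
   |X ∩ F(x)| <= d. *)

Section Counting.
Variable T : eqType.

Lemma count_le1_uniq (p : pred T) s : uniq s ->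
  {in s &, forall j1 j2, p j1 -> p j2 -> j1 = j2} -> count p s <= 1.
Proof.
move=> s_uniq p_inj; rewrite -size_filter.
case: (filter p s) (filter_uniq p s_uniq) (fun y => mem_filter p y s) => [|j [|k l]] //= fu fmem.
have [/andP [pj js] /andP [pk ks]] : p j && (j \in s) /\ p k && (k \in s).
  by rewrite -!fmem !inE !eqxx orbT.
by move: fu; rewrite (p_inj j k) // inE eqxx.
Qed.

Lemma count_eq1_uniq (p : pred T) s : uniq s -> has p s ->
  {in s &, forall j1 j2, p j1 -> p j2 -> j1 = j2} -> count p s = 1.
Proof.
move=> s_uniq /[!has_count] cp p_inj.
by apply/eqP; rewrite eqn_leq cp count_le1_uniq.
Qed.

Lemma count_le_rel_inj (P : pred T) (Q : pred nat) (R : T -> nat -> bool) s1 s2 : uniq s1 ->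
  (forall t, t \in s1 -> P t -> has (fun k => Q k && R t k) s2) ->
  (forall t1 t2 k, t1 \in s1 -> t2 \in s1 -> P t1 -> P t2 -> R t1 k -> R t2 k -> t1 = t2) ->
  count P s1 <= count Q s2.
Proof.
move=> s1_uniq R_total R_inj.
pose f t := nth 0 s2 (find (fun k => Q k && R t k) s2).
have fP t : t \in s1 -> P t -> [/\ f t \in s2, Q (f t) & R t (f t)].
  move=> ts Pt; have hs := R_total t ts Pt.
  by have /andP [] := nth_find 0 hs; split=> //; rewrite mem_nth // -has_find.
rewrite -!size_filter -(size_map f); apply: uniq_leq_size.
  rewrite map_inj_in_uniq ?filter_uniq // => t1 t2.
  rewrite !mem_filter => /andP [P1 t1s] /andP [P2 t2s] e.
  have [_ _ R1] := fP _ t1s P1; have [_ _ R2] := fP _ t2s P2.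
  by apply: (R_inj t1 t2 (f t1)) => //; rewrite e.
move=> k /mapP [t]; rewrite mem_filter => /andP [Pt ts] ->.
by have [? ? _] := fP _ ts Pt; rewrite mem_filter; apply/andP.
Qed.

End Counting.

Section PrefixCode.
Variables (A : finType) (X : pred (seq A)).
Hypothesis X_neq0 : forall u, X u -> u != [::].
Hypothesis X_prefix : forall u v, X u -> X v -> prefix u v -> u = v.

Lemma in_star_fuel n m z : size z <= n -> size z <= m ->
  in_star_aux X n z = in_star_aux X m z.
Proof.
elim: n m z => [|n IH] [|m] z /= zn zm //; try by move: zn zm; case: z.
congr (_ || _); apply: eq_in_has => k; rewrite mem_iota => /andP [k_gt0 _].
by congr (_ && _); apply: IH; rewrite size_drop; lia.
Qed.

Lemma in_starE z : in_star X z =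
  (z == [::]) || has (fun k => X (take k z) && in_star X (drop k z)) (iota 1 (size z)).
Proof.
case: z => [|a z] //; rewrite {1}/in_star (_ : size (a :: z) = (size z).+1) //.
rewrite [LHS]/in_star_aux -/(in_star_aux X); congr (_ || _).
apply: eq_in_has => k; rewrite mem_iota => /andP [k_gt0 _].
by congr (_ && _); apply: in_star_fuel; rewrite size_drop /=; lia.
Qed.

Lemma in_star_split z : in_star X z -> z != [::] ->
  exists2 k, 0 < k <= size z & X (take k z) && in_star X (drop k z).
Proof.
rewrite in_starE => /orP [/eqP -> //|/hasP [k]]; rewrite mem_iota => /andP [k_gt0 k_lt] Xk _.
by exists k; rewrite // k_gt0 -ltnS -add1n.
Qed.

Lemma X_take_inj y k1 k2 : k1 <= size y -> k2 <= size y ->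
  X (take k1 y) -> X (take k2 y) -> k1 = k2.
Proof.
wlog k12 : k1 k2 / k1 <= k2.
  by move=> H ? ? ? ?; case: (leqP k1 k2) => ?; [|symmetry]; apply: H => //; apply: ltnW.
move=> k1y k2y X1 X2.
have : take k1 y = take k2 y by apply: X_prefix; rewrite // prefixE size_takel // take_takel.
by move/(congr1 size); rewrite !size_takel.
Qed.

Lemma no_prefix_inP u : reflect (forall k, k <= size u -> ~~ X (take k u)) (no_prefix_in X u).
Proof.
apply: (iffP hasPn) => H k; last by rewrite mem_iota ltnS => /andP [_ /H].
by move=> ku; apply: H; rewrite mem_iota ltnS.
Qed.

Lemma no_prefix_inPn u : ~~ no_prefix_in X u -> exists2 k, 0 < k <= size u & X (take k u).
Proof.
move/negPn/hasP => [k]; rewrite mem_iota ltnS => /andP [_ ku] Xk.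
exists k; rewrite // ku andbT lt0n.
by apply: contraTneq Xk => ->; rewrite take0; apply/negP => /X_neq0.
Qed.

Lemma star_cut_unique y j1 j2 : j1 <= size y -> j2 <= size y ->
  in_star X (take j1 y) -> no_prefix_in X (drop j1 y) ->
  in_star X (take j2 y) -> no_prefix_in X (drop j2 y) -> j1 = j2.
Proof.
have [n] := ubnP (size y); elim: n y j1 j2 => // n IH y j1 j2 y_lt j1y j2y S1 P1 S2 P2.
have first_factor j : 0 < j -> j <= size y -> in_star X (take j y) ->
    exists2 k, 0 < k <= j & X (take k y) && in_star X (take (j - k) (drop k y)).
  move=> j_gt0 jy /in_star_split []; first by rewrite -size_eq0 size_takel // -lt0n.
  move=> k /andP [k_gt0]; rewrite size_takel // => kj /andP [Xk Sk].
  by exists k; rewrite ?k_gt0 // -(take_takel _ kj) Xk take_drop subnK.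
have no_first j : 0 < j -> j <= size y -> in_star X (take j y) -> ~~ no_prefix_in X y.
  move=> j_gt0 jy /(first_factor _ j_gt0 jy) [k /andP [_ kj] /andP [Xk _]].
  by apply/no_prefix_inP => /(_ k (leq_trans kj jy)); rewrite Xk.
case: (posnP j1) => [j1_0|j1_gt0]; case: (posnP j2) => [j2_0|j2_gt0].
- by rewrite j1_0 j2_0.
- by case/negP: (no_first _ j2_gt0 j2y S2); rewrite -(drop0 y) -j1_0.
- by case/negP: (no_first _ j1_gt0 j1y S1); rewrite -(drop0 y) -j2_0.
have [k1 /andP [_ kj1] /andP [X1 S1']] := first_factor _ j1_gt0 j1y S1.
have [k2 /andP [k2_gt0 kj2] /andP [X2 S2']] := first_factor _ j2_gt0 j2y S2.
have k12 := X_take_inj (leq_trans kj1 j1y) (leq_trans kj2 j2y) X1 X2; subst k2.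
suff : j1 - k1 = j2 - k1 by lia.
apply: (IH (drop k1 y)); rewrite ?size_drop ?leq_sub2r ?drop_drop ?subnK //; lia.
Qed.

Lemma star_cut_exists y :
  exists2 j, j <= size y & in_star X (take j y) && no_prefix_in X (drop j y).
Proof.
have [n] := ubnP (size y); elim: n y => // n IH y y_lt.
case P: (no_prefix_in X y); first by exists 0; rewrite // take0 drop0 P.
have [k /andP [k_gt0 ky] Xk] := no_prefix_inPn (negbT P).
have [|j] := IH (drop k y); first by rewrite size_drop; lia.
rewrite size_drop drop_drop take_drop => jy /andP [Sj Pj].
exists (j + k); first by lia.
rewrite Pj andbT in_starE; apply/orP; right; apply/hasP; exists k.
  by rewrite mem_iota size_takel; lia.
by rewrite take_takel ?leq_addl // Xk.
Qed.

Lemma count_parses_at w i : i <= size w ->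
  count (is_parse X w) [seq (i, j) | j <- iota i ((size w).+1 - i)] =
  no_suffix_in X (take i w).
Proof.
move=> iw; rewrite count_map.
case NS: (no_suffix_in X (take i w)); last first.
  by rewrite (eq_count (a2 := pred0)) ?count_pred0 // => j; rewrite /preim /is_parse /= NS.
apply: count_eq1_uniq; first exact: iota_uniq.
  have [j] := star_cut_exists (drop i w); rewrite size_drop => jw /andP [Sj Pj].
  apply/hasP; exists (i + j); first by rewrite mem_iota; lia.
  by rewrite /preim /is_parse /= NS addnC -take_drop Sj -drop_drop Pj.
move=> j1 j2; rewrite !mem_iota /preim /is_parse /= NS /= => r1 r2 /andP [S1 P1] /andP [S2 P2].
suff : j1 - i = j2 - i by lia.
apply: (@star_cut_unique (drop i w)); rewrite ?take_drop ?drop_drop ?size_drop ?subnK //; lia.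
Qed.

Lemma deltaE w : delta X w = count (fun i => no_suffix_in X (take i w)) (iota 0 (size w).+1).
Proof.
rewrite /delta /cuts count_flatten -map_comp.
have : all (fun i => i <= size w) (iota 0 (size w).+1) by apply/allP => i; rewrite mem_iota.
elim: (iota 0 (size w).+1) => //= i l IH /andP [iw lw].
by rewrite IH // count_parses_at.
Qed.

End PrefixCode.

Section BranchDepths.
Variable A : eqType.

Definition branches_at (S : seq (seq A)) (l : nat) : bool :=
  has (fun u => has (fun v => (take l u == take l v) && (take l.+1 u != take l.+1 v)) S) S.

Lemma branches_at_filter (p : pred (seq A)) m S l : m <= l ->
  (forall u v, take m u = take m v -> p u = p v) ->
  branches_at S l -> branches_at (filter p S) l || branches_at (filter (predC p) S) l.
Proof.
move=> ml p_take /hasP [u uS /hasP [v vS /andP [/eqP uv uv']]].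
have puv : p u = p v by apply: p_take; rewrite -(take_takel _ ml) uv take_takel.
apply/orP; case pu: (p u); [left | right]; apply/hasP; exists u;
  rewrite ?mem_filter /= ?pu ?uS //; apply/hasP; exists v;
  by rewrite ?mem_filter /= -?puv ?pu ?vS ?uv ?eqxx.
Qed.

Lemma size_branch_depths S (L : seq nat) : S != [::] -> uniq L -> all (branches_at S) L ->
  size L < size (undup S).
Proof.
have [n] := ubnP (size L); elim: n L S => // n IH L S L_lt S_neq0 L_uniq L_br.
have [/size0nil -> | L_gt0] := posnP (size L).
  by rewrite lt0n size_eq0; apply: contra S_neq0 => /eqP/undup_nil ->.
have [l lL l_min] := ex_minnP (ex_intro (fun l => l \in L) _ (mem_nth 0 L_gt0)).
have /hasP [u uS /hasP [v vS /andP [uv uv']]] := allP L_br l lL.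
have size_L' : size (rem l L) + 1 = size L.
  by rewrite size_rem // addn1 prednK.
pose p w := take l.+1 w == take l.+1 u.
have L'_gt l' : l' \in rem l L -> l < l'.
  by rewrite mem_rem_uniq // => /andP [/= l'l /l_min]; rewrite leq_eqVlt eq_sym (negPf l'l).
pose S1 := filter p S; pose S2 := filter (predC p) S.
have S_split : size (undup S) = size (undup S1) + size (undup S2).
  by rewrite -!filter_undup !size_filter count_predC.
have L'_split :
    size (rem l L) <= count (branches_at S1) (rem l L) + count (branches_at S2) (rem l L).
  rewrite -count_predUI -count_predT.
  rewrite (eq_in_count (a2 := predU (branches_at S1) (branches_at S2))) ?leq_addr // => l' l'L.
  symmetry; apply: (@branches_at_filter p l.+1).
  - exact: L'_gt.
  - by move=> w1 w2; rewrite /p => ->.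
  - by apply: (allP L_br); apply: mem_rem l'L.
have IH' (T : seq (seq A)) w : w \in T ->
    size (filter (branches_at T) (rem l L)) < size (undup T).
  move=> wT; apply: IH.
  - rewrite size_filter (leq_ltn_trans (count_size _ _)) //.
    by move: L_lt; rewrite -size_L' addn1 ltnS.
  - by apply/eqP => T0; rewrite T0 in wT.
  - by rewrite filter_uniq // rem_uniq.
  - exact: filter_all.
have := IH' S1 u; rewrite mem_filter /p eqxx uS size_filter => /(_ isT).
have := IH' S2 v; rewrite mem_filter /= /p eq_sym uv' vS size_filter => /(_ isT).
rewrite S_split -size_L' addn1 => lt2 lt1.
by apply: leq_trans (leq_add lt1 lt2); rewrite addSn addnS !ltnS.
Qed.

End BranchDepths.

Section Windows.
Variables (A : finType) (x : nat -> A).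

Definition window a l : seq A := mkseq (fun k => x (a + k)) l.

Lemma size_window a l : size (window a l) = l.
Proof. exact: size_mkseq. Qed.

Lemma take_window r a l : take r (window a l) = window a (minn r l).
Proof. by rewrite /window /mkseq -map_take take_iota. Qed.

Lemma drop_window r a l : drop r (window a l) = window (a + r) (l - r).
Proof.
rewrite /window /mkseq -map_drop drop_iota -[0 + r]addnC iotaDl -map_comp.
by apply: eq_map => k /=; rewrite addnA.
Qed.

Lemma windowS a l : window a l.+1 = rcons (window a l) (x (a + l)).
Proof. exact: mkseqS. Qed.

Lemma window_factor a l : factor x (window a l).
Proof. by exists a; rewrite size_window. Qed.

Lemma ultimately_periodic_of_windows T M :
  (forall i j, T <= i -> T <= j -> window i M = window j M -> x (i + M) = x (j + M)) ->
  ultimately_periodic x.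
Proof.
move=> next_eq.
pose f (k : 'I_#|{: M.-tuple A}|.+1) : M.-tuple A := Tuple (introT eqP (size_window (T + k) M)).
have [k1 [k2 k12 fk12]] : exists k1, exists2 k2, k1 != k2 & f k1 = f k2.
  by apply/injectivePn/injectiveP => /leq_card; rewrite card_ord ltnn.
wlog lt12 : k1 k2 k12 fk12 / k1 < k2.
  move=> gen; case: (ltngtP k1 k2) => [|lt21|/val_inj e12]; first exact: gen.
    by apply: (gen k2 k1); rewrite // eq_sym.
  by rewrite e12 eqxx in k12.
have win_eq r : window (T + k1 + r) M = window (T + k2 + r) M.
  elim: r => [|r IH]; first by rewrite !addn0; apply: (congr1 val fk12).
  have shift b : window (b + r.+1) M = drop 1 (window (b + r) M.+1).
    by rewrite drop_window subn1 addnS addn1.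
  by rewrite !shift !windowS IH (next_eq _ (T + k2 + r)) //; lia.
exists (k2 - k1); split; first by rewrite subn_gt0.
exists (T + k1 + M) => i le_i.
have [r ->] : exists r, i = T + k1 + r + M by exists (i - (T + k1 + M)); lia.
rewrite (_ : _ + (k2 - k1) = T + k2 + r + M); last by lia.
by rewrite (next_eq _ _ _ _ (win_eq r)) //; lia.
Qed.

End Windows.

Section WindowParses.
Variables (A : finType) (X : pred (seq A)) (x : nat -> A).
Hypothesis X_neq0 : forall u, X u -> u != [::].
Hypothesis X_prefix : forall u v, X u -> X v -> prefix u v -> u = v.

Local Notation window := (window x).

Definition suffix_free a t : bool := no_suffix_in X (window a t).

Definition nparses a l : nat := count (suffix_free a) (iota 0 l.+1).

Lemma delta_window a l : delta X (window a l) = nparses a l.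
Proof.
rewrite deltaE // size_window; apply: eq_in_count => t.
by rewrite mem_iota ltnS take_window => /andP [_ /minn_idPl ->].
Qed.

Lemma X_window_inj a r1 r2 : X (window a r1) -> X (window a r2) -> r1 = r2.
Proof.
have max_take r : r <= maxn r1 r2 -> window a r = take r (window a (maxn r1 r2)).
  by rewrite take_window => /minn_idPl ->.
rewrite (max_take r1) ?leq_maxl // (max_take r2) ?leq_maxr //.
by apply: X_take_inj; rewrite // size_window ?leq_maxl ?leq_maxr.
Qed.

Lemma suffix_free0 a : suffix_free a 0.
Proof. by rewrite /suffix_free /no_suffix_in /= orbF; apply/negP => /X_neq0. Qed.

Lemma suffix_free_succ a t : suffix_free (a + 1) t -> suffix_free a t.+1 || X (window a t.+1).
Proof.
move=> /hasPn sf1; apply/orP; case: (boolP (X _)) => [|Xw]; [by right | left].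
apply/hasPn => -[_|k]; first by rewrite drop0.
rewrite mem_iota size_window ltnS => /andP [_ kt].
have -> : drop k.+1 (window a t.+1) = drop k (window (a + 1) t).
  by rewrite !drop_window subSS addn1 addSn addnS.
by apply: sf1; rewrite mem_iota size_window.
Qed.

Lemma nparses_last a l : nparses a l.+1 = nparses a l + suffix_free a l.+1.
Proof. by rewrite /nparses -addn1 iotaD count_cat /= addn0 add0n. Qed.

Lemma nparses_mono a l r : nparses a l <= nparses a (l + r).
Proof. by rewrite /nparses -addSn iotaD count_cat leq_addr. Qed.

Lemma nparses_succ_le a l :
  nparses (a + 1) l + (count (fun t => X (window a t.+1)) (iota 0 l.+1) == 0) <= nparses a l.+1.
Proof.
have count_X_le1 : count (fun t => X (window a t.+1)) (iota 0 l.+1) <= 1.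
  by apply: count_le1_uniq (iota_uniq _ _) _ => t1 t2 _ _ X1 X2; have [] := X_window_inj X1 X2.
have -> : nparses a l.+1 = 1 + count (fun t => suffix_free a t.+1) (iota 0 l.+1).
  by rewrite /nparses -[l.+2]add1n iotaD count_cat (iotaDl 1 0) count_map /= suffix_free0.
have : nparses (a + 1) l <= count (fun t => suffix_free a t.+1) (iota 0 l.+1)
                              + count (fun t => X (window a t.+1)) (iota 0 l.+1).
  by rewrite -count_predUI (leq_trans _ (leq_addr _ _)) //; apply: sub_count => t /suffix_free_succ.
by move: count_X_le1; case: eqP => [-> | _]; lia.
Qed.

Lemma nparses_shift a i l : nparses (a + i) l <= nparses a (l + i).
Proof.
elim: i l => [|i IH] l; first by rewrite !addn0.
rewrite addnS -addn1 (leq_trans (leq_trans (leq_addr _ _) (nparses_succ_le _ _))) //.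
by rewrite addnS -addSn IH.
Qed.

End WindowParses.

Section BoundedParses.
Variables (A : finType) (X : pred (seq A)) (x : nat -> A) (d : nat) (s : seq (seq A)).
Hypothesis X_neq0 : forall u, X u -> u != [::].
Hypothesis X_prefix : forall u v, X u -> X v -> prefix u v -> u = v.
Hypothesis nparses_le : forall a l, nparses X x a l <= d.
Hypothesis nparses_reach : forall a, exists a' L, a <= a' /\ nparses X x a' L = d.
Hypothesis X_factors_in : forall w, X w -> factor x w -> w \in s.
Hypothesis size_s : size s <= d.

Local Notation window := (window x).
Local Notation suffix_free := (suffix_free X x).
Local Notation nparses := (nparses X x).

Definition maxlen : nat := \max_(w <- s) size w.

Lemma X_window_le_maxlen a l : X (window a l) -> l <= maxlen.
Proof.
move=> Xw; rewrite -[l](size_window x a).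
exact: leq_bigmax_seq (X_factors_in Xw (window_factor x a l)) _.
Qed.

Lemma nparses_eq_d a : exists L, nparses a L = d.
Proof.
have [a' [L [le_a' nparses_d]]] := nparses_reach a.
exists (L + (a' - a)); apply/eqP; rewrite eqn_leq nparses_le -nparses_d.
by rewrite -{1}(subnKC le_a') nparses_shift.
Qed.

Lemma X_word_at a : exists l, X (window a l.+1).
Proof.
have [L nparses_d] := nparses_eq_d (a + 1).
have := leq_trans (nparses_succ_le x X_neq0 X_prefix a L) (nparses_le a L.+1).
rewrite nparses_d; case: eqP => [_ | /eqP]; first by rewrite [X in _ + X]/= addn1 ltnn.
by rewrite -lt0n -has_count => /hasP [t _ Xt] _; exists t.
Qed.

Definition xword a : seq A := window a (xchoose (X_word_at a)).+1.

Lemma X_xword a : X (xword a).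
Proof. exact: xchooseP (X_word_at a). Qed.

Lemma take_xword a l r : no_prefix_in X (window a l) -> r <= l.+1 -> take r (xword a) = window a r.
Proof.
move=> /no_prefix_inP; rewrite size_window => no_pre rl.
rewrite take_window; congr window; apply/minn_idPl.
apply: leq_trans rl _; rewrite ltnNge; apply/negP => short.
by have := no_pre _ short; rewrite take_window (minn_idPl short) -/(xword a) X_xword.
Qed.

Lemma eventually_not_suffix_free : exists b0, forall c, b0 < c -> ~~ suffix_free 0 c.
Proof.
apply: NNPP => none.
have later b : exists2 c, b < c & suffix_free 0 c.
  by apply: NNPP => nc; apply: none; exists b => c bc; apply/negP => sfc; apply: nc; exists c.
have unbounded k : exists b, k <= nparses 0 b.
  elim: k => [|k [b kb]]; first by exists 0.
  have [[|c] // bc sfc] := later b.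
  exists c.+1; rewrite nparses_last sfc addn1 ltnS (leq_trans kb) //.
  by move: bc; rewrite ltnS => /subnKC <-; apply: nparses_mono.
by have [b] := unbounded d.+1; rewrite ltnNge nparses_le.
Qed.

Lemma X_suffix_start c : ~~ suffix_free 0 c -> exists2 k, k <= c & X (window k (c - k)).
Proof.
move=> /negPn /hasP [k]; rewrite mem_iota size_window ltnS drop_window => /andP [_ kc] Xk.
by exists k.
Qed.

Lemma straddle_count b0 i : (forall c, b0 < c -> ~~ suffix_free 0 c) -> b0 <= i ->
  d <= count (fun k => no_prefix_in X (window k (i + maxlen - k))) (iota i maxlen.+1).
Proof.
move=> late b0i; set n := i + maxlen.
have [L <-] := nparses_eq_d n.+1.
(* t is sent to the start k of the X-word ending at n.+1 + t. *)
apply: (count_le_rel_inj (R := fun t k => X (window k (n.+1 + t - k)) && (k <= n))).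
- exact: iota_uniq.
- move=> t _ sf_t.
  have [|k kc Xk] := X_suffix_start (late (n.+1 + t) _); first by rewrite /n; lia.
  have kn : k <= n.
    rewrite leqNgt; apply/negP => nk; move/hasPn: sf_t => /(_ (k - n.+1)).
    rewrite mem_iota size_window drop_window; have -> : n.+1 + (k - n.+1) = k by lia.
    have -> : t - (k - n.+1) = n.+1 + t - k by lia.
    by rewrite Xk /= => /implyP; rewrite implybF; lia.
  have := X_window_le_maxlen Xk => short.
  apply/hasP; exists k; first by rewrite mem_iota /n; lia.
  rewrite Xk kn !andbT; apply/no_prefix_inP => r; rewrite size_window take_window => r_le.
  rewrite (minn_idPl r_le); apply/negP => Xr.
  by have := X_window_inj X_prefix Xr Xk; rewrite /n; lia.
- move=> t1 t2 k _ _ _ _ /andP [X1 k1] /andP [X2 _].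
  by have := X_window_inj X_prefix X1 X2; lia.
Qed.

Lemma branches_at_straddle i j q :
  window i maxlen = window j maxlen -> x (i + maxlen) != x (j + maxlen) -> q <= maxlen ->
  no_prefix_in X (window (i + q) (maxlen - q)) -> branches_at s (maxlen - q).
Proof.
move=> eq_ij neq_ij qM no_pre; set m := maxlen - q.
have eq_ijq : window (i + q) m = window (j + q) m by rewrite -!drop_window eq_ij.
have no_pre' : no_prefix_in X (window (j + q) m) by rewrite -eq_ijq.
have in_s a : xword a \in s by apply: X_factors_in (X_xword a) (window_factor x _ _).
apply/hasP; exists (xword (i + q)) => //; apply/hasP; exists (xword (j + q)) => //.
rewrite !(take_xword no_pre) // !(take_xword no_pre') // eq_ijq eqxx !windowS eq_ijq /=.
by rewrite -!addnA subnKC // (inj_eq (@rcons_injr _ _)).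
Qed.

Lemma bounded_parses_ultimately_periodic : ultimately_periodic x.
Proof.
have [b0 late] := eventually_not_suffix_free.
apply: (@ultimately_periodic_of_windows _ _ b0 maxlen) => i j b0i b0j eq_ij.
apply/eqP/negPn/negP => neq_ij.
pose Q q := no_prefix_in X (window (i + q) (maxlen - q)).
pose L := [seq maxlen - q | q <- iota 0 maxlen.+1 & Q q].
have d_le : d <= size L.
  rewrite size_map size_filter (leq_trans (straddle_count late b0i)) //.
  have -> : iota i maxlen.+1 = map (addn i) (iota 0 maxlen.+1) by rewrite -iotaDl addn0.
  rewrite count_map; apply/eq_leq/eq_count => q.
  by rewrite /preim /Q /= subnDl.
have : size L < size (undup s).
  apply: size_branch_depths.
  - by apply/eqP => s0; have := X_factors_in (X_xword 0) (window_factor x _ _); rewrite s0.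
  - rewrite map_inj_in_uniq ?filter_uniq ?iota_uniq // => q1 q2.
    by rewrite !mem_filter !mem_iota /=; lia.
  - apply/allP => l /mapP [q]; rewrite mem_filter mem_iota ltnS => /andP [Qq /andP [_ qM]] ->.
    exact: branches_at_straddle eq_ij neq_ij qM Qq.
move/leq_trans/(_ (leq_trans (size_undup s) size_s)).
by rewrite ltnNge d_le.
Qed.

End BoundedParses.

Theorem mainTheorem13 (A : finType) (X : pred (seq A)) (x : nat -> A) :
  maximal_bifix_code X -> thin X -> stable X x ->
  (exists d, is_dF (factor x) X d /\ card_le (fun w => X w /\ factor x w) d) ->
  ultimately_periodic x.
Proof.
move=> [[X_neq0 [X_prefix _]] _] _ x_stable [d [[d_attained d_max] [s [size_s X_in_s]]]].
have delta_windowE := delta_window x X_neq0 X_prefix.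
apply: (bounded_parses_ultimately_periodic (d := d) (s := s) X_neq0 X_prefix) => //.
- by move=> a l; rewrite -delta_windowE; apply/d_max/window_factor.
- move=> a; have [[w [[i ->] dw]] _] := (x_stable a d).2 (conj d_attained d_max).
  exists (a + i), (size w); split; first exact: leq_addr.
  rewrite -delta_windowE -dw; congr (delta X _); apply: eq_mkseq => k.
  by rewrite /shift addnA.
- by move=> w Xw fw; apply: X_in_s.
Qed.
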